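(* Assume $\rho_1,\rho_2$ are strictly positive, $\rho_1(s,a)=\rho_1^{\mathcal S}(s)\pi_{b1}(a\mid s)$, $\gamma_1,\gamma_2\in[0,1)$, $\beta\ge0$, and $\|q_1^\star\|_\infty\le B_{Q1}$, $\|q_2^\star\|_\infty\le B_{Q2}$, $\|d^{P_2}_{\pi_2^\star,\rho_2}/\rho_2\|_\infty\le\kappa_2$, $\|d^{P_1}_{\mu,\rho_1}/\rho_1\|_\infty\le\kappa_1$, $\|d^{P_2}_{\pi_2^\star,\rho_2}/\rho_1\|_\infty\le\kappa_{12}$, $\|\mu/\pi_{b1}\|_\infty\le\kappa_{\mu\mid\pi_{b1}}$, $\|d^{P_2,\mathcal S}_{\pi_2^\star,\rho_2}/\rho_1^{\mathcal S}\|_\infty\le\kappa^{\mathcal S}_{12}$. Let $l_2^\star$, $l_{1,\rm mod}^\star$, $l_{1,\rm coup}^\star$ be the functions satisfying, for all $h$, $\langle l_2^\star,(I-\gamma_2P_2^{\pi_2^\star})h\rangle_{\rho_2}=\langle q_2^\star,h\rangle_{\rho_2}$; $\langle l_{1,\rm mod}^\star,(I-\gamma_1P_1^\mu)h\rangle_{\rho_1}=\langle q_1^\star,h\rangle_{\rho_1}$; $\langle l_{1,\rm coup}^\star,(I-\gamma_1P_1^\mu)h\rangle_{\rho_1}=\beta\langle q_1^\star,h\rangle_{\rho_1}+\langle l_2^\star,(I-\Pi_\mu)h\rangle_{\rho_2}$. Then these are uniquely determined and $$l_2^\star=\frac{(I-\gamma_2(P_2^{\pi_2^\star})^\top)^{-1}(\rho_2\odot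 q_2^\star)}{\rho_2},\quad l_{1,\rm mod}^\star=\frac{(I-\gamma_1(P_1^\mu)^\top)^{-1}(\rho_1\odot q_1^\star)}{\rho_1},$$ $$l_{1,\rm coup}^\star=\beta l_{1,\rm mod}^\star+l_{1,\rm cross}^\star,\qquad l_{1,\rm cross}^\star=\frac{(I-\gamma_1(P_1^\mu)^\top)^{-1}(I-\Pi_\mu)^\top(\rho_2\odot l_2^\star)}{\rho_1}.$$ Consequently $\|l_2^\star\|_\infty\le\frac{\kappa_2}{1-\gamma_2}B_{Q2}$, $\|l_{1,\rm mod}^\star\|_\infty\le\frac{\kappa_1}{1-\gamma_1}B_{Q1}$, and $$\|l_{1,\rm coup}^\star\|_\infty\le\beta\frac{\kappa_1}{1-\gamma_1}B_{Q1}+\frac{\kappa_1(\kappa_{12}+\kappa_{\mu\mid\pi_{b1}}\kappa_{12}^{\mathcal S})}{(1-\gamma_1)(1-\gamma_2)}B_{Q2}.$$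
   Context: Setup: $\mathcal S,\mathcal A$ finite; functions/measures on $\mathcal S\times\mathcal A$ are vectors; $\odot$ and division are pointwise; $K^\top$ denotes the transpose (Euclidean adjoint) of a linear operator $K$, acting on measures. $\langle f,h\rangle_\rho=\sum\rho fh$. $\rho_1,\rho_2$ are probability distributions on $\mathcal S\times\mathcal A$, $\rho_1^{\mathcal S}$ a distribution on $\mathcal S$, $\pi_{b1}$ a policy. $P_1,P_2$ transition kernels; $\mu$ anchor policy; $(\Pi_\mu q)(s,a)=\sum_{a'}\mu(a'\mid s)q(s,a')$; $(P_1^\mu q)(s,a)=\sum_{s'}P_1(s'\mid s,a)\sum_{a'}\mu(a'\mid s')q(s',a')$; $(P_2^\pi h)(s,a)=\sum_{s'}P_2(s'\mid s,a)\sum_{a'}\pi(a'\mid s')h(s',a')$. $q_1^\star,q_2^\star$ are given functions on $\mathcal S\times\mathcal A$ and $\pi_2^\star$ a given policy. Occupancies (state-action initial distribution): $d^{P_2}_{\pi,\rho_2}:=(1-\gamma_2)\sum_{t\ge0}\gamma_2^t((P_2^{\pi})^\top)^t\rho_2$, $d^{P_1}_{\mu,\rho_1}:=(1-\gamma_1)\sum_{t\ge0}\gamma_1^t((P_1^\mu)^\top)^t\rho_1$, and $d^{P_2,\mathcal S}_{\pi,\rho_2}(s):=\sum_a d^{P_2}_{\pi,\rho_2}(s,a)$. *)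

From HB Require Import structures.
From mathcomp Require Import all_boot all_order all_algebra.
From mathcomp Require Import all_classical all_reals.
From mathcomp Require Import topology normedtype sequences.
Set Implicit Arguments. Unset Strict Implicit. Unset Printing Implicit Defensive.
Import Order.TTheory GRing.Theory Num.Theory.
Import numFieldNormedType.Exports.
Local Open Scope ring_scope.

Section MDP.
Variables (R : realType) (S A : finType).
Local Notation T := (S * A)%type.

Definition apply (K : T -> T -> R) (f : T -> R) : T -> R :=
  fun x => \sum_(y : T) K x y * f y.

Definition tr (K : T -> T -> R) : T -> T -> R := fun x y => K y x.

Definition idk : T -> T -> R := fun x y => (x == y)%:R.

Definition IminusK (g : R) (K : T -> T -> R) : T -> T -> R :=
  fun x y => idk x y - g * K x y.

Definition mx_of (K : T -> T -> R) : 'M[R]_#|{: S * A}| :=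
  \matrix_(i, j) K (enum_val i) (enum_val j).
Definition op_of (M : 'M[R]_#|{: S * A}|) : T -> T -> R :=
  fun x y => M (enum_rank x) (enum_rank y).
Definition opinv (K : T -> T -> R) : T -> T -> R := op_of (invmx (mx_of K)).

(* (P^pi h)(s,a) = sum_{s'} P(s'|s,a) sum_{a'} pi(a'|s') h(s',a');
   P s a s' = P(s'|s,a), pi s a = pi(a|s). *)
Definition Ppi (P : S -> A -> S -> R) (pi : S -> A -> R) : T -> T -> R :=
  fun x y => P x.1 x.2 y.1 * pi y.1 y.2.

(* (Pi_mu q)(s,a) = sum_{a'} mu(a'|s) q(s,a') *)
Definition Pimu (mu : S -> A -> R) : T -> T -> R :=
  fun x y => (x.1 == y.1)%:R * mu y.1 y.2.

Definition inner (rho f h : T -> R) : R := \sum_(x : T) rho x * f x * h x.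

Definition sup_norm (f : T -> R) : R := \big[Num.max/0]_(x : T) `|f x|.

Definition pw_mul (f g : T -> R) : T -> R := fun x => f x * g x.
Definition pw_div (f g : T -> R) : T -> R := fun x => f x / g x.

Definition occupancy (g : R) (K : T -> T -> R) (rho : T -> R) : T -> R :=
  fun x => (1 - g) * limn (series (fun t : nat => g ^+ t * iter t (apply (tr K)) rho x)).

Definition occupancyS (g : R) (K : T -> T -> R) (rho : T -> R) : S -> R :=
  fun s => \sum_(a : A) occupancy g K rho (s, a).

Definition is_policy (pi : S -> A -> R) : Prop :=
  (forall s a, 0 <= pi s a) /\ (forall s, \sum_(a : A) pi s a = 1).

Definition is_kernel (P : S -> A -> S -> R) : Prop :=
  (forall s a s', 0 <= P s a s') /\ (forall s a, \sum_(s' : S) P s a s' = 1).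

End MDP.

(* Each adjoint equation says, after testing against indicator functions, that
   [(I - g K^T)(rho l)] equals an explicit source term.  For a stochastic [K] and
   [g < 1] the map [v |-> v - g K v] has trivial kernel (a nonzero fixed point of
   [g K] would have sup norm at most [g] times itself), so [I - g K^T] is invertible
   and the equations have the stated unique solutions.  The inverse is the Neumann
   series [sum_t g^t (K^T)^t], a positive operator; hence a source bounded by
   [c rho] yields a solution bounded by [c] times the resolvent of [rho], which is
   the occupancy measure divided by [1 - g].  Dividing by [rho] and using the
   concentrability constants gives the sup-norm bounds; for the coupled equation
   the source [(I - Pi_mu)^T (rho2 l2)] is controlled through the occupancy of
   [pi2] both at state-action level and, after summing out the actions, at state
   level, where [mu / pi_b1] converts it back to state-action level. *)
From HB Require Import structures.
From mathcomp Require Import all_boot all_order all_algebra.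
From mathcomp Require Import all_classical all_reals.
From mathcomp Require Import topology normedtype sequences.
From mathcomp Require Import ring lra.
Import Order.TTheory GRing.Theory Num.Theory.
Import numFieldNormedType.Exports.
Local Open Scope ring_scope.

Set Implicit Arguments.
Unset Strict Implicit.

Lemma ler_of_norm_divr_le (R : realFieldType) (f r k : R) :
  0 < r -> `|f / r| <= k -> f <= k * r.
Proof. by move=> r_gt0 le_fr; rewrite -ler_pdivrMr //; exact: le_trans (ler_norm _) le_fr. Qed.

Lemma cvg_geometric_rate (R : realType) (g c B : R) (u : nat -> R) : 0 <= g < 1 ->
  (forall n, `|u n - c| <= g ^+ n * B) -> (u @ \oo --> c)%classic.
Proof.
move=> /andP[g_ge0 g_lt1] le_u.
have rate0 : ((fun n => g ^+ n * B) @ \oo --> 0)%classic.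
  have := cvgM (cvg_expr (_ : `|g| < 1)) (cvg_cst B); rewrite mul0r; apply.
  by rewrite ger0_norm.
apply: (squeeze_cvgr (f := fun n => c - g ^+ n * B) (h := fun n => c + g ^+ n * B)).
- apply: nearW => n; have := le_u n; rewrite ler_norml => /andP[? ?].
  by apply/andP; split; lra.
- by have := cvgD (cvg_cst c) (cvgN rate0); rewrite oppr0 addr0; apply.
- by have := cvgD (cvg_cst c) rate0; rewrite addr0; apply.
Qed.

Section Operators.
Variables (R : realType) (S A : finType).
Local Notation T := (S * A)%type.
Local Notation dim := #|{: S * A}|.
Local Notation op M := (@op_of R S A M).

Definition colv (f : T -> R) : 'cV[R]_dim := \col_i f (enum_val i).

Lemma sum_enum_val (F : T -> R) : \sum_(y : T) F y = \sum_(j < dim) F (enum_val j).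
Proof.
rewrite (reindex (fun j : 'I_dim => (enum_val j : T))) //.
by apply: onW_bij; exact: enum_val_bij.
Qed.

Lemma apply_op_ofE (M : 'M[R]_dim) f x :
  apply (op M) f x = (M *m colv f) (enum_rank x) 0.
Proof.
rewrite /apply /op_of mxE sum_enum_val; apply: eq_bigr => j _.
by rewrite mxE enum_valK.
Qed.

Lemma mx_ofK (K : T -> T -> R) : op_of (mx_of K) = K.
Proof. by apply/funext => x; apply/funext => y; rewrite /op_of mxE !enum_rankK. Qed.

Lemma colv_apply M f : colv (apply (op M) f) = M *m colv f.
Proof. by apply/matrixP => i j; rewrite [j]ord1 mxE apply_op_ofE enum_valK. Qed.

Lemma apply_op_ofM M N f : apply (op M) (apply (op N) f) = apply (op (M *m N)) f.
Proof. by apply/funext => x; rewrite !apply_op_ofE colv_apply mulmxA. Qed.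

Lemma apply_op_of1 f : apply (op 1%:M) f = f.
Proof. by apply/funext => x; rewrite apply_op_ofE mul1mx mxE enum_rankK. Qed.

Lemma applyD (K : T -> T -> R) f g x :
  apply K (fun y => f y + g y) x = apply K f x + apply K g x.
Proof. by rewrite /apply -big_split; apply: eq_bigr => y _; rewrite mulrDr. Qed.

Lemma applyB (K : T -> T -> R) f g x :
  apply K (fun y => f y - g y) x = apply K f x - apply K g x.
Proof. by rewrite /apply -sumrB; apply: eq_bigr => y _; rewrite mulrBr. Qed.

Lemma applyZ (K : T -> T -> R) c f x :
  apply K (fun y => c * f y) x = c * apply K f x.
Proof. by rewrite /apply mulr_sumr; apply: eq_bigr => y _; rewrite mulrCA. Qed.

Lemma apply0 (K : T -> T -> R) x : apply K (fun=> 0) x = 0.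
Proof. by rewrite /apply big1 // => y _; rewrite mulr0. Qed.

Lemma sum_mul_idk (f : T -> R) y : \sum_(z : T) f z * idk R z y = f y.
Proof.
rewrite (bigD1 y) //= /idk eqxx mulr1 big1 ?addr0 // => z /negbTE ->.
by rewrite mulr0.
Qed.

Lemma sum_idk_mul (f : T -> R) y : \sum_(z : T) idk R y z * f z = f y.
Proof.
rewrite (bigD1 y) //= /idk eqxx mul1r big1 ?addr0 // => z.
by rewrite eq_sym => /negbTE ->; rewrite mul0r.
Qed.

Lemma tr_IminusK (g : R) (K : T -> T -> R) : tr (IminusK g K) = IminusK g (tr K).
Proof. by apply/funext => x; apply/funext => y; rewrite /tr /IminusK /idk eq_sym. Qed.

Lemma apply_IminusK (g : R) (K : T -> T -> R) f x :
  apply (IminusK g K) f x = f x - g * apply K f x.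
Proof.
rewrite /apply /IminusK; under eq_bigr do rewrite mulrBl.
rewrite sumrB sum_idk_mul mulr_sumr; congr (_ - _).
by apply: eq_bigr => y _; rewrite mulrA.
Qed.

Lemma inner_apply (rho l : T -> R) (K : T -> T -> R) h :
  inner rho l (apply K h) = \sum_y apply (tr K) (pw_mul rho l) y * h y.
Proof.
rewrite /inner /apply; under eq_bigr do rewrite mulr_sumr.
rewrite exchange_big; apply: eq_bigr => y _; rewrite mulr_suml.
by apply: eq_bigr => x _; rewrite /tr /pw_mul; ring.
Qed.

Lemma funext_sum_mul (f g : T -> R) :
  (forall h : T -> R, \sum_y f y * h y = \sum_y g y * h y) -> f = g.
Proof.
by move=> eq_fg; apply/funext => y; have := eq_fg (fun z => idk R z y); rewrite !sum_mul_idk.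
Qed.

Lemma pw_mulK (rho w : T -> R) : (forall x, 0 < rho x) -> pw_mul rho (pw_div w rho) = w.
Proof.
by move=> rho_gt0; apply/funext => x; rewrite /pw_mul /pw_div mulrC mulfVK ?lt0r_neq0.
Qed.

Lemma pw_divK (rho l : T -> R) : (forall x, 0 < rho x) -> pw_div (pw_mul rho l) rho = l.
Proof.
by move=> rho_gt0; apply/funext => x; rewrite /pw_mul /pw_div mulrC mulKf ?lt0r_neq0.
Qed.

Lemma pw_div_applyDZ (K : T -> T -> R) (rho f g : T -> R) b :
  pw_div (apply K (fun y => b * f y + g y)) rho
  = (fun x => b * pw_div (apply K f) rho x + pw_div (apply K g) rho x).
Proof. by apply/funext => x; rewrite /pw_div applyD applyZ mulrDl mulrA. Qed.

Lemma sup_norm_ge0 (f : T -> R) : 0 <= sup_norm f.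
Proof. exact: bigmax_ge_id. Qed.

Lemma ler_sup_norm (f : T -> R) x : `|f x| <= sup_norm f.
Proof. exact: le_bigmax. Qed.

Lemma sup_norm_le (f : T -> R) c : 0 <= c -> (forall x, `|f x| <= c) -> sup_norm f <= c.
Proof. by move=> c_ge0 le_f; apply: bigmax_le. Qed.

Lemma sup_normDZ_le (f g : T -> R) b F G : 0 <= b ->
  sup_norm f <= F -> sup_norm g <= G -> sup_norm (fun x => b * f x + g x) <= b * F + G.
Proof.
move=> b_ge0 le_f le_g.
have [F_ge0 G_ge0] := (le_trans (sup_norm_ge0 f) le_f, le_trans (sup_norm_ge0 g) le_g).
apply: sup_norm_le => [|x]; first by rewrite addr_ge0 ?mulr_ge0.
apply: le_trans (ler_normD _ _) _; rewrite normrM (ger0_norm b_ge0).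
apply: lerD; last exact: le_trans (ler_sup_norm g x) le_g.
by apply: ler_wpM2l => //; exact: le_trans (ler_sup_norm f x) le_f.
Qed.

Lemma norm_pw_mul_le (rho q : T -> R) B : (forall x, 0 < rho x) -> sup_norm q <= B ->
  forall w, `|pw_mul rho q w| <= B * rho w.
Proof.
move=> rho_gt0 le_q w; rewrite /pw_mul normrM (gtr0_norm (rho_gt0 w)) mulrC.
by apply: ler_wpM2r; [exact: ltW | exact: le_trans (ler_sup_norm q w) le_q].
Qed.

Section Stochastic.
Variable K : T -> T -> R.
Hypothesis K_ge0 : forall x y, 0 <= K x y.
Hypothesis K_sum1 : forall x, \sum_y K x y = 1.

Lemma norm_apply_le f x : `|apply K f x| <= sup_norm f.
Proof.
apply: le_trans (ler_norm_sum _ _ _) _.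
apply: le_trans (_ : \sum_y K x y * sup_norm f <= _); last by rewrite -mulr_suml K_sum1 mul1r.
apply: ler_sum => y _; rewrite normrM ger0_norm //.
by apply: ler_wpM2l => //; exact: ler_sup_norm.
Qed.

Lemma fixpoint_eq0 g v : 0 <= g < 1 -> (forall y, v y = g * apply K v y) ->
  forall y, v y = 0.
Proof.
move=> /andP[g_ge0 g_lt1] v_fix.
have v_le : sup_norm v <= g * sup_norm v.
  apply: sup_norm_le => [|y]; first by rewrite mulr_ge0 ?sup_norm_ge0.
  by rewrite v_fix normrM ger0_norm // ler_wpM2l // norm_apply_le.
have v_le0 : sup_norm v <= 0 by have := sup_norm_ge0 v; nra.
by move=> y; apply/eqP; rewrite -normr_le0; exact: le_trans (ler_sup_norm v y) v_le0.
Qed.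

Variable g : R.
Hypothesis g_ge0_lt1 : 0 <= g < 1.
Local Notation M := (IminusK g (tr K)).
Local Notation Minv := (opinv M).

(* A row of the kernel of [mx_of M] is a fixed point of [g K], hence zero. *)
Lemma unitmx_IminusK : mx_of M \in unitmx.
Proof.
rewrite -row_free_unit -kermx_eq0; apply/eqP/row_matrixP => i; rewrite row0.
set r := row i (kermx (mx_of M)).
have r_ker : r *m mx_of M = 0 by rewrite /r -row_mul mulmx_ker row0.
pose v y := r 0 (enum_rank y).
have v_fix y : v y = g * apply K v y.
  have : \sum_(z : T) v z * M z y = 0.
    transitivity ((r *m mx_of M) 0 (enum_rank y)); last by rewrite r_ker mxE.
    rewrite [LHS]sum_enum_val [RHS]mxE; apply: eq_bigr => j _.
    by rewrite /v enum_valK [mx_of _ _ _]mxE enum_rankK.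
  rewrite /IminusK /tr; under eq_bigr do rewrite mulrBr.
  rewrite sumrB sum_mul_idk /apply mulr_sumr => /eqP; rewrite subr_eq0 => /eqP ->.
  by apply: eq_bigr => z _; ring.
by apply/rowP => j; have := fixpoint_eq0 g_ge0_lt1 v_fix (enum_val j); rewrite /v enum_valK !mxE.
Qed.

Lemma apply_IminusK_opinv v : apply M (apply Minv v) = v.
Proof. by rewrite /opinv -{1}(mx_ofK M) apply_op_ofM mulmxV ?unitmx_IminusK // apply_op_of1. Qed.

Lemma apply_opinv_IminusK v : apply Minv (apply M v) = v.
Proof. by rewrite /opinv -{2}(mx_ofK M) apply_op_ofM mulVmx ?unitmx_IminusK // apply_op_of1. Qed.

Section Neumann.
Variable v : T -> R.
Local Notation z t := (iter t (apply (tr K)) v).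

Lemma sum_norm_iter_le t : \sum_y `|z t y| <= \sum_y `|v y|.
Proof.
elim: t => [|t IHt] /=; first exact: lexx.
apply: le_trans IHt; rewrite /apply /tr.
apply: le_trans (_ : \sum_y \sum_w K w y * `|z t w| <= _).
  apply: ler_sum => y _; apply: le_trans (ler_norm_sum _ _ _) _.
  by apply: ler_sum => w _; rewrite normrM (ger0_norm (K_ge0 _ _)).
rewrite exchange_big /=; apply: ler_sum => w _.
by rewrite -mulr_suml K_sum1 mul1r.
Qed.

Lemma norm_iter_le t y : `|z t y| <= \sum_w `|v w|.
Proof. by apply: le_trans (sum_norm_iter_le t); rewrite (bigD1 y) //= lerDl sumr_ge0. Qed.

Lemma iter_ge0 t y : (forall w, 0 <= v w) -> 0 <= z t y.
Proof.
move=> v_ge0; elim: t y => [|t IHt] y //=.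
by rewrite /apply; apply: sumr_ge0 => w _; rewrite mulr_ge0 ?K_ge0 ?IHt.
Qed.

Lemma apply_IminusK_partial_sum t x :
  apply M (fun y => \sum_(0 <= i < t) g ^+ i * z i y) x = v x - g ^+ t * z t x.
Proof.
elim: t x => [|t IHt] x.
  under eq_fun do rewrite big_geq //.
  by rewrite apply0 expr0 mul1r subrr.
under eq_fun do rewrite big_nat_recr //=.
rewrite applyD applyZ IHt apply_IminusK /= exprSr; ring.
Qed.

(* The tail of the Neumann series is [g^t (I - g K^T)^-1 (K^T)^t v], and the
   iterates [(K^T)^t v] stay bounded; this gives the geometric rate. *)
Lemma partial_sumE t x : \sum_(0 <= i < t) g ^+ i * z i x
  = apply Minv v x - g ^+ t * apply Minv (z t) x.
Proof.
rewrite -applyZ -applyB.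
under [in RHS]eq_fun do rewrite -apply_IminusK_partial_sum.
by rewrite apply_opinv_IminusK.
Qed.

Lemma cvg_neumann x :
  ((fun n => series (fun t => g ^+ t * z t x) n) @ \oo --> apply Minv v x)%classic.
Proof.
apply: (@cvg_geometric_rate _ g _ (\sum_y `|Minv x y| * \sum_w `|v w|) _ g_ge0_lt1) => t.
have g_ge0 : 0 <= g by case/andP: g_ge0_lt1.
rewrite seriesEnat /= partial_sumE addrAC subrr add0r normrN normrM.
rewrite (ger0_norm (exprn_ge0 _ g_ge0)) ler_wpM2l ?exprn_ge0 //.
apply: le_trans (ler_norm_sum _ _ _) (ler_sum _ _) => y _.
by rewrite normrM ler_wpM2l // norm_iter_le.
Qed.

Lemma neumannE x :
  limn (series (fun t => g ^+ t * z t x)) = apply Minv v x.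
Proof. exact: cvg_lim (@cvg_neumann x). Qed.

Lemma opinv_ge0 x : (forall w, 0 <= v w) -> 0 <= apply Minv v x.
Proof.
move=> v_ge0; rewrite -neumannE; apply: limr_ge; first exact: cvgP (@cvg_neumann x).
apply: nearW => t; rewrite seriesEnat; apply: sumr_ge0 => i _.
by rewrite mulr_ge0 ?iter_ge0 ?exprn_ge0 //; case/andP: g_ge0_lt1.
Qed.

End Neumann.

Lemma opinv_le (v1 v2 : T -> R) x : (forall w, v1 w <= v2 w) ->
  apply Minv v1 x <= apply Minv v2 x.
Proof.
move=> le_v; rewrite -subr_ge0 -applyB; apply: opinv_ge0 => w.
by rewrite subr_ge0.
Qed.

Lemma norm_opinv_le (v : T -> R) x : `|apply Minv v x| <= apply Minv (fun w => `|v w|) x.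
Proof.
rewrite ler_norml -mulN1r -applyZ; apply/andP; split; apply: opinv_le => w.
  by rewrite mulN1r lerNl -normrN ler_norm.
exact: ler_norm.
Qed.

Lemma occupancyE rho x : occupancy g K rho x = (1 - g) * apply Minv rho x.
Proof. by rewrite /occupancy neumannE. Qed.

Lemma occupancy_ge0 rho x : (forall w, 0 <= rho w) -> 0 <= occupancy g K rho x.
Proof.
move=> rho_ge0; rewrite occupancyE mulr_ge0 ?opinv_ge0 // subr_ge0 ltW //.
by case/andP: g_ge0_lt1.
Qed.

Lemma norm_opinv_le_occupancy (f rho : T -> R) c x : (forall w, `|f w| <= c * rho w) ->
  `|apply Minv f x| <= c / (1 - g) * occupancy g K rho x.
Proof.
move=> le_f; have g_neq1 : 1 - g != 0 by case/andP: g_ge0_lt1 => _ ?; rewrite subr_eq0 gt_eqF.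
rewrite occupancyE mulrA mulfVK // -applyZ.
by apply: le_trans (norm_opinv_le f x) (opinv_le _ _).
Qed.

Section AdjointEquation.
Variable rho : T -> R.
Hypothesis rho_gt0 : forall x, 0 < rho x.

(* Testing the adjoint equation against indicators identifies [rho l] with the
   resolvent of the source [rhs], whence existence and uniqueness at once. *)
Lemma adjoint_eqP (l rhs : T -> R) (F : (T -> R) -> R) :
  (forall h, F h = \sum_y rhs y * h y) ->
  (forall h, inner rho l (apply (IminusK g K) h) = F h) <->
  l = pw_div (apply Minv rhs) rho.
Proof.
move=> FE; split => [eq_l|->].
  have rho_l : apply M (pw_mul rho l) = rhs.
    by apply: funext_sum_mul => h; rewrite -FE -eq_l inner_apply tr_IminusK.
  by rewrite -rho_l apply_opinv_IminusK pw_divK.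
by move=> h; rewrite FE inner_apply tr_IminusK pw_mulK // apply_IminusK_opinv.
Qed.

Lemma sup_norm_adjoint_solution_le (f : T -> R) c kappa : 0 <= c ->
  sup_norm (pw_div (occupancy g K rho) rho) <= kappa ->
  (forall w, `|f w| <= c * rho w) ->
  sup_norm (pw_div (apply Minv f) rho) <= kappa / (1 - g) * c.
Proof.
move=> c_ge0 le_occ le_f; case/andP: (g_ge0_lt1) => g_ge0 g_lt1.
have g1_gt0 : 0 < 1 - g by rewrite subr_gt0.
have kappa_ge0 := le_trans (sup_norm_ge0 _) le_occ.
apply: sup_norm_le => [|x]; first by rewrite mulr_ge0 // divr_ge0 // ltW.
have occ_le : occupancy g K rho x <= kappa * rho x.
  exact: ler_of_norm_divr_le (rho_gt0 x) (le_trans (ler_sup_norm _ x) le_occ).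
rewrite /pw_div normrM normfV (gtr0_norm (rho_gt0 x)) ler_pdivrMr //.
apply: le_trans (norm_opinv_le_occupancy x le_f) _.
have -> : kappa / (1 - g) * c * rho x = c / (1 - g) * (kappa * rho x) by ring.
by rewrite ler_wpM2l // divr_ge0 // ltW.
Qed.

Lemma sup_norm_adjoint_solution_pw_mul_le (q : T -> R) B kappa :
  sup_norm (pw_div (occupancy g K rho) rho) <= kappa -> sup_norm q <= B ->
  sup_norm (pw_div (apply Minv (pw_mul rho q)) rho) <= kappa / (1 - g) * B.
Proof.
move=> le_occ le_q; apply: sup_norm_adjoint_solution_le le_occ (norm_pw_mul_le rho_gt0 le_q).
exact: le_trans (sup_norm_ge0 q) le_q.
Qed.

End AdjointEquation.
End Stochastic.

Lemma Ppi_stochastic (P : S -> A -> S -> R) pi : is_kernel P -> is_policy pi ->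
  (forall x y, 0 <= Ppi P pi x y) /\ (forall x, \sum_y Ppi P pi x y = 1).
Proof.
move=> [P_ge0 P_sum1] [pi_ge0 pi_sum1]; split=> [x y|x]; first exact: mulr_ge0.
rewrite /Ppi -(pair_bigA _ (fun s a => P x.1 x.2 s * pi s a)) /=.
under eq_bigr do rewrite -mulr_sumr pi_sum1 mulr1.
exact: P_sum1.
Qed.

Lemma sum_fiber (F : T -> R) s :
  \sum_(z : T) (z.1 == s)%:R * F z = \sum_(a : A) F (s, a).
Proof.
transitivity (\sum_(z : T) (z.1 == s)%:R * F (z.1, z.2)).
  by apply: eq_bigr => -[].
rewrite -(pair_bigA _ (fun s' a => (s' == s)%:R * F (s', a))) /= (bigD1 s) //= eqxx.
under eq_bigr do rewrite mul1r.
rewrite [X in _ + X]big1 ?addr0 // => s' /negbTE s's.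
by apply: big1 => a _; rewrite s's mul0r.
Qed.

Lemma apply_tr_IminusPimu (mu : S -> A -> R) (W : T -> R) s a :
  apply (tr (IminusK 1 (Pimu mu))) W (s, a)
  = W (s, a) - mu s a * \sum_(a' : A) W (s, a').
Proof.
rewrite tr_IminusK apply_IminusK mul1r -sum_fiber; congr (_ - _).
by rewrite /apply /tr /Pimu mulr_sumr; apply: eq_bigr => z _ /=; ring.
Qed.

Lemma cross_source_le (mu pib : S -> A -> R) (rho : T -> R) (rhoS : S -> R)
    (occ W : T -> R) (e k k_mu kS : R) :
  (forall x, 0 < rho x) -> (forall s, 0 <= rhoS s) ->
  (forall s a, rho (s, a) = rhoS s * pib s a) -> (forall s a, 0 <= mu s a) ->
  0 <= e -> (forall z, 0 <= occ z) -> (forall z, `|W z| <= e * occ z) ->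
  sup_norm (pw_div occ rho) <= k ->
  sup_norm (fun x : T => mu x.1 x.2 / pib x.1 x.2) <= k_mu ->
  \big[Num.max/0]_(s : S) `|(\sum_(a : A) occ (s, a)) / rhoS s| <= kS ->
  forall x, `|apply (tr (IminusK 1 (Pimu mu))) W x| <= (k + k_mu * kS) * e * rho x.
Proof.
move=> rho_gt0 rhoS_ge0 rhoE mu_ge0 e_ge0 occ_ge0 le_W le_occ le_mu le_occS [s a].
have rhoS_gt0 : 0 < rhoS s.
  rewrite lt0r rhoS_ge0 andbT; apply/eqP => rhoS0.
  by have := rho_gt0 (s, a); rewrite rhoE rhoS0 mul0r ltxx.
have pib_gt0 : 0 < pib s a by rewrite -(pmulr_rgt0 _ rhoS_gt0) -rhoE.
have occ_le : occ (s, a) <= k * rho (s, a).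
  exact: ler_of_norm_divr_le (rho_gt0 _) (le_trans (ler_sup_norm _ (s, a)) le_occ).
have mu_le : mu s a <= k_mu * pib s a.
  exact: ler_of_norm_divr_le pib_gt0 (le_trans (ler_sup_norm _ (s, a)) le_mu).
have occS_le : \sum_(a' : A) occ (s, a') <= kS * rhoS s.
  exact: ler_of_norm_divr_le rhoS_gt0 (le_trans (le_bigmax _ _ s) le_occS).
have mu_occS := ler_pM (mu_ge0 s a) (sumr_ge0 _ (fun a' _ => occ_ge0 (s, a'))) mu_le occS_le.
have sumW_le : `|\sum_(a' : A) W (s, a')| <= e * \sum_(a' : A) occ (s, a').
  by rewrite mulr_sumr; apply: le_trans (ler_norm_sum _ _ _) (ler_sum _ _) => a' _.
rewrite apply_tr_IminusPimu; apply: le_trans (ler_normB _ _) _.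
rewrite normrM (ger0_norm (mu_ge0 s a)).
apply: le_trans (lerD (le_W (s, a)) (ler_wpM2l (mu_ge0 s a) sumW_le)) _.
rewrite rhoE in occ_le *; nra.
Qed.

Lemma sup_norm_cross_solution_le (K1 K2 : T -> T -> R) (g1 g2 : R)
    (mu pib : S -> A -> R) (rho1 rho2 q2 : T -> R) (rho1S : S -> R)
    (B2 k1 k12 k_mu k12S : R) :
  (forall x y, 0 <= K1 x y) -> (forall x, \sum_y K1 x y = 1) ->
  (forall x y, 0 <= K2 x y) -> (forall x, \sum_y K2 x y = 1) ->
  0 <= g1 < 1 -> 0 <= g2 < 1 -> (forall x, 0 < rho1 x) -> (forall x, 0 < rho2 x) ->
  (forall s, 0 <= rho1S s) -> (forall s a, rho1 (s, a) = rho1S s * pib s a) ->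
  (forall s a, 0 <= mu s a) -> sup_norm q2 <= B2 ->
  sup_norm (pw_div (occupancy g1 K1 rho1) rho1) <= k1 ->
  sup_norm (pw_div (occupancy g2 K2 rho2) rho1) <= k12 ->
  sup_norm (fun x : T => mu x.1 x.2 / pib x.1 x.2) <= k_mu ->
  \big[Num.max/0]_(s : S) `|(\sum_(a : A) occupancy g2 K2 rho2 (s, a)) / rho1S s| <= k12S ->
  sup_norm (pw_div (apply (opinv (IminusK g1 (tr K1)))
      (apply (tr (IminusK 1 (Pimu mu)))
         (pw_mul rho2 (pw_div (apply (opinv (IminusK g2 (tr K2))) (pw_mul rho2 q2)) rho2))))
      rho1)
    <= k1 / (1 - g1) * ((k12 + k_mu * k12S) * (B2 / (1 - g2))).
Proof.
move=> K1_ge0 K1_sum1 K2_ge0 K2_sum1 hg1 hg2 rho1_gt0 rho2_gt0 rho1S_ge0 rho1E mu_ge0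
  le_q2 le_occ1 le_occ12 le_mu le_occ12S.
have B2_ge0 := le_trans (sup_norm_ge0 q2) le_q2.
have e_ge0 : 0 <= B2 / (1 - g2).
  by case/andP: hg2 => _ g2_lt1; rewrite divr_ge0 // subr_ge0 ltW.
have occ2_ge0 z : 0 <= occupancy g2 K2 rho2 z.
  by apply: occupancy_ge0 => // w; exact: ltW.
have c_ge0 : 0 <= (k12 + k_mu * k12S) * (B2 / (1 - g2)).
  have k12S_ge0 := le_trans (bigmax_ge_id _ _ _ _) le_occ12S.
  have [k12_ge0 k_mu_ge0] := (le_trans (sup_norm_ge0 _) le_occ12, le_trans (sup_norm_ge0 _) le_mu).
  by rewrite mulr_ge0 // addr_ge0 ?mulr_ge0.
apply: sup_norm_adjoint_solution_le c_ge0 le_occ1 _ => //.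
apply: cross_source_le rho1_gt0 rho1S_ge0 rho1E mu_ge0 e_ge0 occ2_ge0 _ le_occ12 le_mu le_occ12S.
move=> z; rewrite pw_mulK //.
exact: norm_opinv_le_occupancy (norm_pw_mul_le rho2_gt0 le_q2).
Qed.

End Operators.

Theorem proposition3p4 (R : realType) (S A : finType)
  (rho1 rho2 : S * A -> R) (rho1S : S -> R) (pib1 : S -> A -> R)
  (P1 P2 : S -> A -> S -> R) (mu pi2 : S -> A -> R) (q1 q2 : S * A -> R)
  (gamma1 gamma2 beta BQ1 BQ2 kappa1 kappa2 kappa12 kappamu kappa12S : R) :
  \sum_(x : S * A) rho1 x = 1 -> \sum_(x : S * A) rho2 x = 1 ->
  (forall s, 0 <= rho1S s) -> \sum_(s : S) rho1S s = 1 ->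
  is_policy pib1 -> is_policy mu -> is_policy pi2 ->
  is_kernel P1 -> is_kernel P2 ->
  (forall x, 0 < rho1 x) -> (forall x, 0 < rho2 x) ->
  (forall s a, rho1 (s, a) = rho1S s * pib1 s a) ->
  0 <= gamma1 < 1 -> 0 <= gamma2 < 1 -> 0 <= beta ->
  sup_norm q1 <= BQ1 -> sup_norm q2 <= BQ2 ->
  sup_norm (pw_div (occupancy gamma2 (Ppi P2 pi2) rho2) rho2) <= kappa2 ->
  sup_norm (pw_div (occupancy gamma1 (Ppi P1 mu) rho1) rho1) <= kappa1 ->
  sup_norm (pw_div (occupancy gamma2 (Ppi P2 pi2) rho2) rho1) <= kappa12 ->
  sup_norm (fun x : S * A => mu x.1 x.2 / pib1 x.1 x.2) <= kappamu ->
  \big[Num.max/0]_(s : S)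
     `|occupancyS gamma2 (Ppi P2 pi2) rho2 s / rho1S s| <= kappa12S ->
  let K2 := Ppi P2 pi2 in
  let K1 := Ppi P1 mu in
  let eq2 (l2 : S * A -> R) := forall h : S * A -> R,
    inner rho2 l2 (apply (IminusK gamma2 K2) h) = inner rho2 q2 h in
  let eq1mod (l1 : S * A -> R) := forall h : S * A -> R,
    inner rho1 l1 (apply (IminusK gamma1 K1) h) = inner rho1 q1 h in
  let eq1coup (l2 l1 : S * A -> R) := forall h : S * A -> R,
    inner rho1 l1 (apply (IminusK gamma1 K1) h)
    = beta * inner rho1 q1 h + inner rho2 l2 (apply (IminusK 1 (Pimu mu)) h) in
  let l2f := pw_div (apply (opinv (IminusK gamma2 (tr K2))) (pw_mul rho2 q2)) rho2 in
  let l1modf := pw_div (apply (opinv (IminusK gamma1 (tr K1))) (pw_mul rho1 q1)) rho1 in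
  let l1crossf := pw_div (apply (opinv (IminusK gamma1 (tr K1)))
                     (apply (tr (IminusK 1 (Pimu mu))) (pw_mul rho2 l2f))) rho1 in
  (exists l2 l1mod l1coup, [/\ eq2 l2, eq1mod l1mod & eq1coup l2 l1coup]) /\
  (forall l2 l1mod l1coup, eq2 l2 -> eq1mod l1mod -> eq1coup l2 l1coup ->
    [/\ l2 = l2f, l1mod = l1modf,
        l1coup = (fun x => beta * l1modf x + l1crossf x) &
      [/\ sup_norm l2 <= kappa2 / (1 - gamma2) * BQ2,
        sup_norm l1mod <= kappa1 / (1 - gamma1) * BQ1 &
        sup_norm l1coup <= beta * (kappa1 / (1 - gamma1)) * BQ1
          + kappa1 * (kappa12 + kappamu * kappa12S)
            / ((1 - gamma1) * (1 - gamma2)) * BQ2]]).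
Proof.
move=> _ _ rho1S_ge0 _ _ hmu hpi2 hP1 hP2 rho1_gt0 rho2_gt0 rho1E hg1 hg2 beta_ge0
  le_q1 le_q2 le_occ2 le_occ1 le_occ21 le_mu le_occ21S K2 K1 eq2 eq1mod eq1coup
  l2f l1modf l1crossf.
have [K1_ge0 K1_sum1] := Ppi_stochastic hP1 hmu.
have [K2_ge0 K2_sum1] := Ppi_stochastic hP2 hpi2.
have sol2 l : eq2 l <-> l = l2f := adjoint_eqP K2_ge0 K2_sum1 hg2 rho2_gt0 l (fun=> erefl).
have sol1 l : eq1mod l <-> l = l1modf := adjoint_eqP K1_ge0 K1_sum1 hg1 rho1_gt0 l (fun=> erefl).
have solc l : eq1coup l2f l <-> l = (fun x => beta * l1modf x + l1crossf x).
  rewrite /l1modf /l1crossf -pw_div_applyDZ; apply: adjoint_eqP => // h.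
  rewrite inner_apply mulr_sumr -big_split.
  by apply: eq_bigr => y _; rewrite mulrDl mulrA.
split.
  exists l2f, l1modf, (fun x => beta * l1modf x + l1crossf x).
  by split; [apply/sol2 | apply/sol1 | apply/solc].
move=> l2 l1mod l1coup /sol2 -> /sol1 -> /solc ->.
have bound1 := sup_norm_adjoint_solution_pw_mul_le K1_ge0 K1_sum1 hg1 rho1_gt0 le_occ1 le_q1.
have bound_cross := sup_norm_cross_solution_le K1_ge0 K1_sum1 K2_ge0 K2_sum1 hg1 hg2
  rho1_gt0 rho2_gt0 rho1S_ge0 rho1E (proj1 hmu) le_q2 le_occ1 le_occ21 le_mu le_occ21S.
split=> //; split=> //.
  exact: (sup_norm_adjoint_solution_pw_mul_le K2_ge0 K2_sum1 hg2 rho2_gt0 le_occ2 le_q2).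
apply: le_trans (sup_normDZ_le beta_ge0 bound1 bound_cross) _.
by rewrite le_eqVlt invfM; apply/orP; left; apply/eqP; ring.
Qed.
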